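(* Let $a\in\mathbb{C}$ and $\varphi(z)=az^2+(1-2a)z+a$, so that $\varphi(1)=1$ and $\varphi'(1)=1$. Then $\varphi$ maps the open unit disk $\mathbb{D}$ into $\mathbb{D}$ if and only if $|a-\tfrac14|\le \tfrac14$. Moreover, if $|a-\tfrac14|\le\tfrac14$ and $a\neq 0$, then the only points $\zeta\in\partial\mathbb{D}$ with $|\varphi(\zeta)|=1$ are $\zeta=1$ (with $\varphi(1)=1$) and, only in the case $|a-\tfrac14|=\tfrac14$, the point $\zeta=-1$ (with $\varphi(-1)=4a-1$); every other point of $\partial\mathbb{D}$ is mapped into $\mathbb{D}$.
   Context: $\mathbb{D}=\{z\in\mathbb{C}:|z|<1\}$ is the open unit disk and $\partial\mathbb{D}$ the unit circle. $\varphi$ is a polynomial, hence analytic on a neighborhood of $\overline{\mathbb{D}}$. *)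

From HB Require Import structures.
From mathcomp Require Import all_boot all_order all_algebra.
From mathcomp Require Import complex.
From mathcomp Require Import reals.
Set Implicit Arguments. Unset Strict Implicit. Unset Printing Implicit Defensive.
Import Order.TTheory GRing.Theory Num.Theory.
Local Open Scope ring_scope.
Local Open Scope complex_scope.

Definition phi_poly (R : realType) (a : R[i]) : {poly R[i]} :=
  a *: 'X^2 + (1 - 2 * a) *: 'X + a%:P.

From mathcomp Require Import all_boot all_order all_algebra.
From mathcomp Require Import complex.
From mathcomp Require Import reals.
From mathcomp Require Import ring lra.
Import Order.TTheory GRing.Theory Num.Theory.
Local Open Scope ring_scope.
Local Open Scope complex_scope.

(** With [c := 1 - 4 a] one has [4 phi(z) = (z + 1)^2 - c (z - 1)^2], and
  [|a - 1/4| <= 1/4] means [|c| <= 1].  If [|c| <= 1], the triangle inequality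
  and the parallelogram law give [4 |phi(z)| <= |z + 1|^2 + |z - 1|^2
  = 2 |z|^2 + 2 < 4] inside the disk.  If [|c| > 1], then [|phi(-1)| = |c| > 1]
  and [phi(-r)] is still outside the disk for [r < 1] close to [1].  On the
  circle, [zeta = u + i v] gives
  [|phi(zeta)|^2 - 1 = (2 - 2u) ((2 - 2u) |a|^2 - 2 Re a)], which is [<= 0]
  because [|c| <= 1] reads [|a|^2 <= Re a / 2], and vanishes only for [u = 1]
  or for [u = -1] with [|a|^2 = Re a / 2], i.e. [|c| = 1]. *)

Section ComplexModulus.
Context {R : rcfType}.
Implicit Types (x z : R[i]) (k : R).

Lemma normc_le1 x : (`|x| <= 1) = (complex.Re x ^+ 2 + complex.Im x ^+ 2 <= 1).
Proof.
rewrite -(expr_le1 (n := 2)) ?normr_ge0 // -add_Re2_Im2.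
by rewrite -(rmorph1 (real_complex R)) lecR.
Qed.

Lemma normc_eq1 x : `|x| = 1 <-> complex.Re x ^+ 2 + complex.Im x ^+ 2 = 1.
Proof.
rewrite (rwP eqP) -(pexpr_eq1 (n := 2)) ?normr_ge0 // -add_Re2_Im2.
by rewrite -(rmorph1 (real_complex R)) (inj_eq (@complexI R)); split=> /eqP.
Qed.

Lemma normc_parallelogram1 z : `|z + 1| ^+ 2 + `|z - 1| ^+ 2 = 2 * `|z| ^+ 2 + 2.
Proof. by rewrite !normCK !rmorphB !rmorphD !rmorph1; ring. Qed.

Lemma normc_real k : `|k%:C| = `|k|%:C.
Proof. by rewrite normc_def /= expr0n addr0 sqrtr_sqr. Qed.

Lemma one_sub4_sqr (A B : R) :
  complex.Re (1 - 4 * (A +i* B)) ^+ 2 + complex.Im (1 - 4 * (A +i* B)) ^+ 2 =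
  1 + 8 * (2 * (A ^+ 2 + B ^+ 2) - A).
Proof. by rewrite /=; ring. Qed.

End ComplexModulus.

Section QuarterDisk.
Context {F : numFieldType}.
Implicit Type a : F.

Lemma norm_one_sub4 a : `|1 - 4 * a| = 4 * `|a - 4^-1|.
Proof.
rewrite (_ : 1 - 4 * a = - 4 * (a - 4^-1)); last by field.
by rewrite normrM normrN normr_nat.
Qed.

Lemma quarter_disk_le a : (`|a - 4^-1| <= 4^-1) = (`|1 - 4 * a| <= 1).
Proof. by rewrite norm_one_sub4 -ler_pdivlMl ?mulr1. Qed.

Lemma quarter_circle_eq a : (`|a - 4^-1| == 4^-1) = (`|1 - 4 * a| == 1).
Proof.
by rewrite norm_one_sub4 -(inj_eq (mulfI (_ : 4 != 0))) ?mulfV ?pnatr_eq0.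
Qed.

End QuarterDisk.

Section CircleDefect.
Context {R : realFieldType}.

Let scaled_bound {A q u : R} :
  q <= A / 2 -> u <= 1 -> (2 - 2 * u) * q <= (1 - u) * A.
Proof.
move=> q_le u_le.
rewrite (_ : (1 - u) * A = (2 - 2 * u) * (A / 2)); last by field.
by apply: ler_wpM2l; lra.
Qed.

Lemma circle_defect_le0 {A q u : R} : 0 < A -> q <= A / 2 -> -1 <= u <= 1 ->
  (2 - 2 * u) * ((2 - 2 * u) * q - 2 * A) <= 0.
Proof.
move=> A_gt0 q_le /andP[u_ge u_le]; have q_scaled := scaled_bound q_le u_le.
by apply: mulr_ge0_le0; nra.
Qed.

Lemma circle_defect_eq0 {A q u : R} : 0 < A -> q <= A / 2 -> -1 <= u <= 1 ->
  (2 - 2 * u) * ((2 - 2 * u) * q - 2 * A) = 0 <-> u = 1 \/ (u = -1 /\ q = A / 2).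
Proof.
move=> A_gt0 q_le /andP[u_ge u_le]; have q_scaled := scaled_bound q_le u_le.
split=> [/eqP | [-> | [-> ->]]]; rewrite ?mulf_eq0; last 2 first.
- by ring.
- by field.
case/orP=> /eqP defect0; first by left; lra.
have u_eq : u = -1 by nra.
by right; split=> //; rewrite u_eq in defect0; lra.
Qed.

End CircleDefect.

Lemma complex_eq (R : pzRingType) (u v u' v' : R) :
  u +i* v = u' +i* v' <-> u = u' /\ v = v'.
Proof. by split=> [[-> ->] | [-> ->]]. Qed.

Section Phi.
Context {R : realType}.
Implicit Types (a z : R[i]).

Lemma phi_horner a z : (phi_poly a).[z] = z + a * (z - 1) ^+ 2.
Proof. by rewrite /phi_poly !hornerE /=; ring. Qed.

Lemma phi1 a : (phi_poly a).[1] = 1.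
Proof. by rewrite phi_horner subrr expr0n mulr0 addr0. Qed.

Lemma deriv_phi1 a : (phi_poly a)^`().[1] = 1.
Proof. by rewrite /phi_poly !derivE !hornerE /=; ring. Qed.

Lemma phiN1 a : (phi_poly a).[-1] = 4 * a - 1.
Proof. by rewrite phi_horner; ring. Qed.

Lemma phi_quarter a z :
  4 * (phi_poly a).[z] = (z + 1) ^+ 2 - (1 - 4 * a) * (z - 1) ^+ 2.
Proof. by rewrite phi_horner; ring. Qed.

Lemma phi_maps_disk a z :
  `|1 - 4 * a| <= 1 -> `|z| < 1 -> `|(phi_poly a).[z]| < 1.
Proof.
move=> c_le1 z_lt1.
have phi_le : 4 * `|(phi_poly a).[z]| <= `|z + 1| ^+ 2 + `|z - 1| ^+ 2.
  rewrite -(normr_nat _ 4) -normrM phi_quarter; apply: le_trans (ler_normB _ _) _.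
  by rewrite normrX normrM normrX lerD2l ler_piMl ?exprn_ge0.
have z2_lt1 : `|z| ^+ 2 < 1 by rewrite expr_lt1.
rewrite -(ltr_pM2l (_ : 0 < 4)) // mulr1; apply: le_lt_trans phi_le _.
rewrite normc_parallelogram1 (_ : 4 = 2 * 1 + 2) ?ltrD2r ?ltr_pM2l //.
by rewrite mulr1 -natrD.
Qed.

Lemma phi_leaves_disk a :
  1 < `|1 - 4 * a| -> exists2 z, `|z| < 1 & 1 < `|(phi_poly a).[z]|.
Proof.
move=> c_gt1.
have [k ck] : exists k : R, `|1 - 4 * a| = k%:C by eexists; exact: normc_def.
have k_gt1 : 1 < k by rewrite -ltcR -ck rmorph1.
(* With [s := 1 - r]:
   [4 |phi(-r)| >= k (2 - s)^2 - s^2 >= 4 k - (4 k + 1) s = 2 k + 2]. *)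
set s := 2 * (k - 1) / (4 * k + 1).
have s_def : s * (4 * k + 1) = 2 * (k - 1).
  by rewrite mulfVK //; apply: lt0r_neq0; lra.
have s_gt0 : 0 < s by rewrite divr_gt0 //; lra.
have s_lt1 : s < 1 by nra.
exists (s - 1)%:C.
  rewrite normc_real ltr0_norm ?subr_lt0 //.
  by rewrite -(rmorph1 (real_complex R)) ltcR; lra.
rewrite -(ltr_pM2l (_ : 0 < 4)) // mulr1 -(normr_nat _ 4) -normrM phi_quarter.
rewrite distrC; apply: lt_le_trans (lerB_dist _ _).
have -> : (s - 1)%:C + 1 = s%:C :> R[i] by rewrite rmorphB rmorph1 subrK.
have -> : (s - 1)%:C - 1 = (s - 2)%:C :> R[i].
  by rewrite !rmorphB rmorph1 rmorph_nat; ring.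
rewrite normrM ck !normrX !normc_real normr_nat.
rewrite (gtr0_norm s_gt0) ltr0_norm; last lra.
rewrite -!rmorphXn -rmorphM -rmorphB -(rmorph_nat (real_complex R)) ltcR.
have : k * (4 - 4 * s) <= k * (- (s - 2)) ^+ 2 by rewrite ler_pM2l; nra.
nra.
Qed.

Lemma phi_circle_sqr (A B u v : R) : u ^+ 2 + v ^+ 2 = 1 ->
  complex.Re (phi_poly (A +i* B)).[u +i* v] ^+ 2 +
  complex.Im (phi_poly (A +i* B)).[u +i* v] ^+ 2 =
  1 + (2 - 2 * u) * ((2 - 2 * u) * (A ^+ 2 + B ^+ 2) - 2 * A).
Proof.
move=> uv1; rewrite phi_horner /=; apply/eqP; rewrite -subr_eq0; apply/eqP.
transitivity ((u ^+ 2 + v ^+ 2 - 1) * (1 + 2 * A * (u - 2) - 2 * B * v +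
  (A ^+ 2 + B ^+ 2) * (u ^+ 2 + v ^+ 2 + 3 - 4 * u))); first by ring.
by rewrite uv1 subrr mul0r.
Qed.

Lemma phi_circle {a zeta : R[i]} : `|1 - 4 * a| <= 1 -> a != 0 -> `|zeta| = 1 ->
  `|(phi_poly a).[zeta]| <= 1 /\
  (`|(phi_poly a).[zeta]| = 1 <-> zeta = 1 \/ `|1 - 4 * a| == 1 /\ zeta = -1).
Proof.
case: a => A B; case: zeta => u v.
rewrite normc_le1 one_sub4_sqr => c_le1 a_neq0 /normc_eq1 /= uv1.
have q_le : A ^+ 2 + B ^+ 2 <= A / 2 by lra.
have A_gt0 : 0 < A.
  rewrite lt_def andbC; apply/andP; split; first nra.
  apply: contraNneq a_neq0 => A0.
  have B0 : B = 0 by apply/eqP; rewrite -sqrf_eq0 eq_le sqr_ge0 andbT; nra.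
  by rewrite A0 B0.
have u_bnd : -1 <= u <= 1 by apply/andP; split; nra.
have v0 : u ^+ 2 = 1 -> v = 0.
  by move=> u2; apply/eqP; rewrite -sqrf_eq0; apply/eqP; lra.
have c_eq1 : `|1 - 4 * (A +i* B)| == 1 <-> A ^+ 2 + B ^+ 2 = A / 2.
  by rewrite -(rwP eqP) normc_eq1 one_sub4_sqr; split; lra.
have defect_eq0 := circle_defect_eq0 A_gt0 q_le u_bnd.
rewrite normc_le1 normc_eq1 phi_circle_sqr // c_eq1.
have -> : (-1 : R[i]) = (-1) +i* 0.
  by apply/eqP; rewrite eq_complex /= oppr0 !eqxx.
rewrite !complex_eq.
split; first by have := circle_defect_le0 A_gt0 q_le u_bnd; lra.
split=> [phi_eq1 | [[u1 v_0] | [q_eq [u1 v_0]]]].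
- have [u1 | [u1 q_eq]] : u = 1 \/ u = -1 /\ A ^+ 2 + B ^+ 2 = A / 2.
    by apply/defect_eq0; lra.
  + by left; split=> //; apply: v0; rewrite u1 expr1n.
  + by right; split=> //; split=> //; apply: v0; rewrite u1 sqrrN expr1n.
- have /defect_eq0 : u = 1 \/ u = -1 /\ A ^+ 2 + B ^+ 2 = A / 2 by left.
  lra.
- have /defect_eq0 : u = 1 \/ u = -1 /\ A ^+ 2 + B ^+ 2 = A / 2 by right.
  lra.
Qed.

End Phi.

Local Close Scope complex_scope.

Theorem mainTheorem1 (R : realType) (a : R[i]) :
  let phi := phi_poly a in
  let onBoundaryCirc := `|a - 4^-1| == 4^-1 in
  [/\ phi.[1] = 1, (phi^`()).[1] = 1,
   (forall z : R[i], `|z| < 1 -> `|phi.[z]| < 1) <-> `|a - 4^-1| <= 4^-1 &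
   `|a - 4^-1| <= 4^-1 -> a != 0 ->
     forall zeta : R[i], `|zeta| = 1 ->
       (`|phi.[zeta]| = 1 <-> (zeta = 1 \/ (onBoundaryCirc /\ zeta = -1)))
       /\ (~ (zeta = 1 \/ (onBoundaryCirc /\ zeta = -1)) -> `|phi.[zeta]| < 1)
       /\ (zeta = -1 -> phi.[zeta] = 4 * a - 1)].
Proof.
move=> phi onBoundaryCirc.
rewrite /onBoundaryCirc quarter_circle_eq quarter_disk_le.
split; [exact: phi1 | exact: deriv_phi1 | split | ].
- move=> maps_disk; rewrite real_leNgt ?normr_real ?rpred1 //.
  apply/negP => /phi_leaves_disk [z /maps_disk phi_lt1 phi_gt1].
  by have := lt_trans phi_gt1 phi_lt1; rewrite ltxx.
- by move=> c_le1 z; apply: phi_maps_disk.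
move=> c_le1 a_neq0 zeta zeta1.
have [phi_le1 phi_eq1] := phi_circle c_le1 a_neq0 zeta1.
split=> //; split=> [not_peak | ->]; last exact: phiN1.
by rewrite lt_neqAle phi_le1 andbT; apply/eqP => /phi_eq1.
Qed.
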